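(* Let $G=(V,E,w)$ be a weighted undirected $n$-vertex graph with distinct positive edge weights that contains a Hamiltonian path (no triangle inequality or completeness is assumed), and let $r:V\to\mathbb{R}^+$ be a range assignment. Let $F=(V,E_F)$ be the minimum spanning forest of $S=SDG(G,r)$ and let $H$ be a minimum-weight Hamiltonian path of $G$. Then there is an edge set $\tilde E\subseteq E_F$ with $w(\tilde E)\le w(H)$ such that $F\setminus\tilde E$ contains at least $\frac15\cdot n$ isolated vertices.
   Context: For a weighted graph $G=(V,E,w)$ and $r:V\to\mathbb{R}^+$, the symmetric disk graph $SDG(G,r)$ is the spanning subgraph of $G$ containing an edge $e=(u,v)\in E$ if and only if $r(u)\ge w(e)$ and $r(v)\ge w(e)$. The minimum spanning forest of a weighted graph is a spanning forest with the same connected components and minimum total weight (unique for distinct weights). The weight of an edge set is the sum of its edge weights. *)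

From HB Require Import structures.
From mathcomp Require Import all_boot all_order all_algebra.
Set Implicit Arguments. Unset Strict Implicit. Unset Printing Implicit Defensive.
Import Order.TTheory GRing.Theory Num.Theory.
Local Open Scope ring_scope.

(* A weighted undirected simple graph on a finite vertex type V is an edge set
   E : {set {set V}} (each edge a 2-element vertex set) with a weight w on edges. *)
Definition is_graph (V : finType) (E : {set {set V}}) : Prop :=
  forall f, f \in E -> #|f| = 2%N.

Definition adj (V : finType) (A : {set {set V}}) : rel V :=
  fun x y => (x != y) && ([set x; y] \in A).

Definition wset (R : realFieldType) (V : finType) (w : {set V} -> R)
  (A : {set {set V}}) : R := \sum_(f in A) w f.

Definition distinct_pos_weights (R : realFieldType) (V : finType)
  (E : {set {set V}}) (w : {set V} -> R) : Prop :=
  (forall f, f \in E -> 0 < w f) /\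
  (forall f g, f \in E -> g \in E -> w f = w g -> f = g).

Definition SDG (R : realFieldType) (V : finType) (E : {set {set V}})
  (w : {set V} -> R) (r : V -> R) : {set {set V}} :=
  [set f in E | [forall u in f, w f <= r u]].

Definition has_cycle (V : finType) (A : {set {set V}}) : Prop :=
  exists c : seq V, [/\ (3 <= size c)%N, uniq c & cycle (adj A) c].

Definition forest (V : finType) (A : {set {set V}}) : Prop := ~ has_cycle A.

Definition spanning_forest_of (V : finType) (S F : {set {set V}}) : Prop :=
  [/\ F \subset S, forest F & forall x y, connect (adj F) x y = connect (adj S) x y].

Definition min_spanning_forest (R : realFieldType) (V : finType)
  (w : {set V} -> R) (S F : {set {set V}}) : Prop :=
  spanning_forest_of S F /\
  forall F', spanning_forest_of S F' -> wset w F <= wset w F'.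

Definition ham_path (V : finType) (E : {set {set V}}) (p : seq V) : Prop :=
  [/\ uniq p, forall v, v \in p &
      (if p is x :: q then path (adj E) x q else true)].

Definition path_weight (R : realFieldType) (V : finType) (w : {set V} -> R)
  (p : seq V) : R :=
  \sum_(xy <- zip p (behead p)) w [set xy.1; xy.2].

Definition min_ham_path (R : realFieldType) (V : finType) (E : {set {set V}})
  (w : {set V} -> R) (p : seq V) : Prop :=
  ham_path E p /\ forall q, ham_path E q -> path_weight w p <= path_weight w q.

Definition isolated (V : finType) (A : {set {set V}}) : {set V} :=
  [set v | [forall f in A, v \notin f]].

(* For a threshold t let F>=t be the edges of F of weight at least t.
   Counting components, #F>=t is at most the number of edges of H of weight at
   least t plus the number m(t) of edges of H lighter than t that are missing
   from S: the edges of H lighter than t that lie in S are spanned by the edges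
   of F lighter than t (cut property of minimum spanning forests), and H
   connects all vertices.  Let D be the largest deficit of F>=t over the edges of
   H of weight at least t, attained at t0.  After deleting a set X of at most D
   heaviest edges of F, the remaining weights are dominated one by one by those
   of H, so their total is at most w(H).  Every edge of X weighs at least t0,
   and #X <= m(t0).  An edge of H missing from S and lighter than t0 has an
   endpoint whose range is below t0; that endpoint is isolated in X, and it
   lies on at most two edges of H.  Hence n - iso <= 2 #X <= 2 m(t0) <= 4 iso. *)

From HB Require Import structures.
From mathcomp Require Import all_boot all_order all_algebra zify.
Import Order.TTheory GRing.Theory Num.Theory.
Set Implicit Arguments. Unset Strict Implicit. Unset Printing Implicit Defensive.

Lemma leq_card_imset_coarser (T U : finType) (f g : T -> {set U}) (D : {set T}) :
  {in D &, forall i j, f i = f j -> g i = g j} -> #|g @: D| <= #|f @: D|.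
Proof.
move=> fg; pose h (C : {set U}) := \bigcup_(x in D | f x == C) g x.
suff -> : g @: D = h @: (f @: D) by apply: leq_imset_card.
rewrite -imset_comp; apply: eq_in_imset => i iD /=.
apply/setP=> u; apply/idP/bigcupP => [ug | [j /andP[jD /eqP fji] uj]].
  by exists i; rewrite ?iD ?eqxx.
by rewrite -(fg _ _ jD iD fji).
Qed.

Lemma card_bigcup_le (T I : finType) (P : pred I) (F : I -> {set T}) :
  #|\bigcup_(i | P i) F i| <= \sum_(i | P i) #|F i|.
Proof.
apply: (big_ind2 (fun (A : {set T}) n => #|A| <= n)) => // [|A m B n Am Bn].
  by rewrite cards0.
exact: leq_trans (leq_card_setU A B) (leq_add Am Bn).
Qed.

Lemma size_le_fibers (T : eqType) (U : finType) (g : T -> U) (C : {set U}) (s : seq T) k :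
  all (fun x => g x \in C) s -> (forall c, count (fun x => g x == c) s <= k) ->
  size s <= k * #|C|.
Proof.
move=> gC fib; suff -> : size s = \sum_(c in C) count (fun x => g x == c) s.
  by rewrite mulnC -sum_nat_const; apply: leq_sum => c _; apply: fib.
elim: s gC {fib} => [|x s IH] /=; first by rewrite big1.
case/andP=> gx /IH ->; rewrite big_split /= -add1n; congr (_ + _).
by rewrite (bigD1 (g x)) //= eqxx big1 // => c /andP[_ /negbTE]; rewrite eq_sym => ->.
Qed.

Lemma count_zip_fst (T1 T2 : eqType) (a : pred T1) (s : seq T1) (t : seq T2) :
  count (a \o fst) (zip s t) <= count a s.
Proof. by elim: s t => [|x s IH] [|y t] //=; rewrite leq_add2l. Qed.

Lemma count_zip_snd (T1 T2 : eqType) (a : pred T2) (s : seq T1) (t : seq T2) :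
  count (a \o snd) (zip s t) <= count a t.
Proof. by elim: s t => [|x s IH] [|y t] //=; rewrite leq_add2l. Qed.

Lemma count_imset_filter_le (T : finType) (U : finType) (f : T -> {set U}) (P : pred {set U})
    (s : seq T) :
  #|[set g in [set f x | x in s] | P g]| <= count (P \o f) s.
Proof.
rewrite -size_filter; apply: leq_trans (card_size _).
apply: leq_trans (leq_imset_card f _); apply/subset_leq_card/subsetP=> g.
by rewrite inE => /andP[/imsetP[x xs ->] Px]; rewrite imset_f // mem_filter /= Px.
Qed.

Section Majorization.
Local Open Scope ring_scope.
Variables (R : realFieldType) (T : finType) (a : T -> R).
Implicit Types (A X : {set T}) (b : seq R) (t : R).

Definition card_ge A t := #|[set x in A | t <= a x]|.
Definition count_ge t b := count (>= t) b.

Lemma card_ge_setD1 A m t : m \in A ->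
  card_ge A t = ((t <= a m)%R + card_ge (A :\ m) t)%N.
Proof.
move=> mA; rewrite /card_ge (cardsD1 m) inE mA; congr (_ + _)%N.
by apply: eq_card => x; rewrite !inE andbA.
Qed.

Lemma card_ge_eq0 A t : {in A, forall x, a x < t} -> card_ge A t = 0%N.
Proof.
move=> At; apply: eq_card0 => x; rewrite !inE.
by apply/andP=> -[/At xt]; rewrite leNgt xt.
Qed.

Lemma set_argmax A : A != set0 -> exists2 m, m \in A & {in A, forall x, a x <= a m}.
Proof. by case/set0Pn=> x0 x0A; case: (arg_maxP a x0A) => m mA mmax; exists m. Qed.

Lemma majorization_sum_le A b : all (>= 0) b ->
  (forall t, card_ge A t <= count_ge t b)%N ->
  \sum_(x in A) a x <= \sum_(y <- b) y.
Proof.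
have [n] := ubnP #|A|; elim: n A b => // n IH A b; rewrite ltnS => An b0 Ab.
have [->|An0] := eqVneq A set0.
  by rewrite big_set0 big_seq sumr_ge0 // => y /(allP b0).
have [m mA mmax] := set_argmax An0.
have /hasP[y0 y0b my0] : has (>= a m) b.
  by rewrite has_count (leq_trans _ (Ab (a m))) // (card_ge_setD1 _ mA) lexx.
have b_y0 := perm_to_rem y0b.
rewrite (big_setD1 m mA) (perm_big _ b_y0) big_cons /= lerD //.
apply: IH; first by rewrite (cardsD1 m) mA in An.
  by apply/allP=> y /mem_rem/(allP b0).
move=> t; have [tm | mt] := lerP t (a m).
  have := Ab t; rewrite (card_ge_setD1 _ mA) tm /count_ge (permP b_y0) /= (le_trans tm my0).
  by rewrite !add1n ltnS.
by rewrite card_ge_eq0 // => x /setD1P[_ /mmax xm]; apply: le_lt_trans xm mt.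
Qed.

Lemma majorization_sum_le_trim d A b : all (>= 0) b ->
  (forall t, card_ge A t <= d + count_ge t b)%N ->
  exists X, [/\ X \subset A, (#|X| <= d)%N, {in X & A :\: X, forall x y, a y <= a x} &
                \sum_(x in A :\: X) a x <= \sum_(y <- b) y].
Proof.
move=> b0; elim: d A => [|d IH] A Ab.
  exists set0; split; [exact: sub0set | by rewrite cards0 | by move=> x y; rewrite inE |].
  by rewrite setD0; apply: majorization_sum_le.
have [->|An0] := eqVneq A set0.
  exists set0; split; [exact: sub0set | by rewrite cards0 | by move=> x y; rewrite inE |].
  by rewrite setD0 big_set0 big_seq sumr_ge0 // => y /(allP b0).
have [m mA mmax] := set_argmax An0.
have [X [sXA cX top sum]] : exists X, [/\ X \subset A :\ m, (#|X| <= d)%N,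
    {in X & A :\ m :\: X, forall x y, a y <= a x} &
    \sum_(x in A :\ m :\: X) a x <= \sum_(y <- b) y].
  apply: IH => t; have [tm | mt] := lerP t (a m).
    by have := Ab t; rewrite (card_ge_setD1 _ mA) tm add1n addSn ltnS.
  by rewrite card_ge_eq0 // => x /setD1P[_ /mmax xm]; apply: le_lt_trans xm mt.
have AmX : A :\: (m |: X) = A :\ m :\: X by rewrite setDDl setUC.
exists (m |: X); split.
- by rewrite subUset sub1set mA (subset_trans sXA) ?subsetDl.
- by rewrite (leq_trans (leq_card_setU _ _)) // cards1 add1n ltnS.
- move=> x y; rewrite AmX in_setU1 => /predU1P[-> | xX] yAX; last exact: top.
  by apply: mmax; move: yAX; rewrite !inE => /and3P[].
- by rewrite AmX.
Qed.

Lemma top_ge_threshold A X t : {in X & A :\: X, forall x y, a y <= a x} ->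
  (#|X| <= card_ge A t)%N -> {in X, forall x, t <= a x}.
Proof.
move=> top cX x xX; rewrite leNgt; apply/negP=> xt.
have: [set y in A | t <= a y] \proper X.
  apply/properP; split; last by exists x; rewrite // inE leNgt xt andbF.
  apply/subsetP=> y /setIdP[yA ty]; apply/negPn/negP=> yX.
  have yx : a y <= a x by apply: top; rewrite // inE yX.
  by have := lt_le_trans (le_lt_trans yx xt) ty; rewrite ltxx.
by move/proper_card; rewrite ltnNge cX.
Qed.

Lemma card_ge_le_max_deficit A b t :
  (card_ge A t <= \max_(m in A) (card_ge A (a m) - count_ge (a m) b) + count_ge t b)%N.
Proof.
rewrite {1}/card_ge.
have [-> | [m0 m0B]] := set_0Vmem [set x in A | t <= a x]; first by rewrite cards0.
case: (arg_minP a m0B) => m /setIdP[mA tm] mmin.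
have -> : [set x in A | t <= a x] = [set x in A | a m <= a x].
  apply/setP=> x; rewrite !inE; apply/andP/andP=> -[xA h]; split=> //.
    by apply: mmin; apply/setIdP.
  exact: le_trans tm h.
rewrite addnC -leq_subLR (leq_trans _ (leq_bigmax_cond _ mA)) //.
by apply/leq_sub2l/sub_count => y /=; apply: le_trans tm.
Qed.

Lemma exists_trim_threshold A b (N : R -> nat) : all (>= 0) b ->
  (forall t, card_ge A t <= count_ge t b + N t)%N ->
  exists X t0, [/\ X \subset A, {in X, forall x, t0 <= a x}, (#|X| <= N t0)%N &
                  \sum_(x in A :\: X) a x <= \sum_(y <- b) y].
Proof.
move=> b0 AbN.
have [X [sXA cX top sum]] := majorization_sum_le_trim b0 (card_ge_le_max_deficit A b).
have [A0 | An0] := eqVneq A set0.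
  have X0 : X = set0 by apply/eqP; rewrite -subset0 -A0.
  by exists X, 0; split; rewrite // X0 ?cards0 // => x; rewrite inE.
have A_gt0 : (0 < #|A|)%N by rewrite card_gt0.
have [m mA Dm] := eq_bigmax_cond (fun m => card_ge A (a m) - count_ge (a m) b)%N A_gt0.
exists X, (a m); split=> //.
- by apply: top_ge_threshold top _; rewrite (leq_trans cX) // Dm leq_subr.
- by rewrite (leq_trans cX) // Dm leq_subLR.
Qed.

End Majorization.

Section Connectivity.
Variable V : finType.
Implicit Types (A B : {set {set V}}) (a b p q x y : V).

Lemma set2C x y : [set x; y] = [set y; x].
Proof. exact: setUC. Qed.

Lemma eq_set2 x y p q :
  [set x; y] = [set p; q] -> (x = p /\ y = q) \/ (x = q /\ y = p).
Proof.
move=> Exy; have: x \in [set p; q] by rewrite -Exy set21.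
have: y \in [set p; q] by rewrite -Exy set22.
have: p \in [set x; y] by rewrite Exy set21.
have: q \in [set x; y] by rewrite Exy set22.
by do 4![case/set2P=> ?; subst]; auto.
Qed.

Lemma adjC A : symmetric (adj A).
Proof. by move=> x y; rewrite /adj eq_sym set2C. Qed.

Lemma connect_adjC A x y : connect (adj A) x y = connect (adj A) y x.
Proof. exact: (sym_connect_sym (@adjC A)). Qed.

Lemma edge_connect A x y : [set x; y] \in A -> connect (adj A) x y.
Proof.
have [-> _ | nxy xyA] := eqVneq x y; first exact: connect0.
by apply: connect1; rewrite /adj nxy.
Qed.

Lemma adj_sub A B : A \subset B -> subrel (adj A) (adj B).
Proof. by move=> sAB x y /andP[nxy /(subsetP sAB) xyB]; rewrite /adj nxy. Qed.

Lemma connect_adj_sub A B x y :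
  A \subset B -> connect (adj A) x y -> connect (adj B) x y.
Proof. by move=> sAB; apply: connect_sub x y => u v /(adj_sub sAB)/connect1. Qed.

Lemma connect_setU1 A p q x y : connect (adj ([set p; q] |: A)) x y ->
  [\/ connect (adj A) x y,
      connect (adj A) x p /\ connect (adj A) q y |
      connect (adj A) x q /\ connect (adj A) p y].
Proof.
case/connectP=> s + ->; elim: s x => [|z s IH] x /=; first by move=> _; apply: Or31.
case/andP=> /andP[nxz]; rewrite in_setU1 => /orP[/eqP/eq_set2[[-> ->]|[-> ->]] | xzA].
- by case/IH=> [c|[_ c]|[_ c]]; [apply: Or32 | apply: Or32 | apply: Or31];
    rewrite ?connect0.
- by case/IH=> [c|[_ c]|[_ c]]; [apply: Or33 | apply: Or31 | apply: Or33];
    rewrite ?connect0.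
have xz : connect (adj A) x z by apply: connect1; rewrite /adj nxz.
case/IH=> [c|[c1 c2]|[c1 c2]].
- by apply: Or31; apply: connect_trans c.
- by apply: Or32; split=> //; apply: connect_trans c1.
- by apply: Or33; split=> //; apply: connect_trans c1.
Qed.

Lemma connect_setU1_connected A p q x y : connect (adj A) p q ->
  connect (adj ([set p; q] |: A)) x y -> connect (adj A) x y.
Proof.
move=> pq /connect_setU1[//|[xp qy]|[xq py]].
- by apply: connect_trans qy; apply: connect_trans pq.
- by apply: connect_trans py; apply: connect_trans xq _; rewrite connect_adjC.
Qed.

Lemma connect_setU1_swap A a b p q : ~~ connect (adj A) a b ->
  connect (adj ([set p; q] |: A)) a b -> connect (adj ([set a; b] |: A)) p q.
Proof.
set A' := [set a; b] |: A.
have lift u v : connect (adj A) u v -> connect (adj A') v u.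
  by rewrite connect_adjC; apply/connect_adj_sub/subsetUr.
have ab : connect (adj A') a b by apply: edge_connect; rewrite setU11.
move=> nab /connect_setU1[ab'|[ap qb]|[aq pb]]; first by rewrite ab' in nab.
- exact: connect_trans (connect_trans (lift _ _ ap) ab) (lift _ _ qb).
- rewrite connect_adjC.
  exact: connect_trans (connect_trans (lift _ _ aq) ab) (lift _ _ pb).
Qed.

Lemma connect_setU1_drop A B p q x y : A \subset B -> ~~ connect (adj B) p q ->
  connect (adj B) x y -> connect (adj ([set p; q] |: A)) x y -> connect (adj A) x y.
Proof.
move=> sAB npq xy /connect_setU1[//|[xp qy]|[xq py]]; case/negP: npq.
- rewrite connect_adjC in xp; rewrite connect_adjC in qy.
  exact: connect_trans (connect_trans (connect_adj_sub sAB xp) xy) (connect_adj_sub sAB qy).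
- rewrite connect_adjC in xy.
  exact: connect_trans (connect_trans (connect_adj_sub sAB py) xy) (connect_adj_sub sAB xq).
Qed.

End Connectivity.

Section Forests.
Variable V : finType.
Implicit Types (A B : {set {set V}}) (p q x y : V).

Lemma forest_sub A B : A \subset B -> forest B -> forest A.
Proof.
move=> sAB fB [c [c3 uc cyc]]; apply: fB; exists c; split=> //.
exact: sub_cycle (adj_sub sAB) _ cyc.
Qed.

Lemma forest_edge_sep A p q : forest A -> [set p; q] \in A -> p != q ->
  ~~ connect (adj (A :\ [set p; q])) p q.
Proof.
move=> fA pqA npq; apply/negP=> /connectP[s0 pth0 qs0].
case/shortenP: pth0 qs0 => s pth us _ qs; apply: fA; exists (p :: s); split=> //.
- case: s pth us qs => [|z [|z' s]] //= pth us qs; first by rewrite qs eqxx in npq.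
  by move: pth; rewrite -qs andbT /adj !inE eqxx andbF.
- rewrite /cycle rcons_path (sub_path _ pth) /=; last exact/adj_sub/subsetDl.
  by rewrite -qs /adj eq_sym npq set2C.
Qed.

Lemma path_setD1 A (f : {set V}) z x s : z \notin x :: s -> z \in f ->
  path (adj A) x s -> path (adj (A :\ f)) x s.
Proof.
elim: s x => [|y s IH] x //=; rewrite !inE negb_or => /andP[zx zs] zf.
case/andP=> /andP[nxy xyA] pth; rewrite IH // andbT /adj nxy !inE xyA andbT.
apply: contraTneq zf => <-; rewrite !inE negb_or zx.
by move: zs; rewrite negb_or => /andP[].
Qed.

Lemma edge_sep_forest A :
  (forall x y, [set x; y] \in A -> x != y -> ~~ connect (adj (A :\ [set x; y])) x y) ->
  forest A.
Proof.
move=> sepA [[|x [|y s]] [//= c3 uc]]; rewrite /cycle /= => /andP[/andP[nxy xyA]].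
rewrite rcons_path => /andP[pth /andP[nlx lxA]].
have sn : s != [::] by case: s c3 {uc pth nlx lxA}.
apply: (negP (sepA x y xyA nxy)); rewrite connect_adjC; apply/connectP.
exists (rcons s x); last by rewrite last_rcons.
move: uc; rewrite /= !inE !negb_or => /andP[/andP[_ xs] /andP[ys _]].
rewrite rcons_path (path_setD1 (z := x) _ _ pth) ?set21 /= ?inE ?negb_or ?xs ?nxy //.
have ls : last y s \in s by case: s sn {c3 pth nlx lxA xs ys} => //= z t _; exact: mem_last.
rewrite /adj nlx !inE lxA andbT; apply/eqP => /eq_set2[[lx _]|[ly _]].
- by rewrite -lx ls in xs.
- by rewrite -ly ls in ys.
Qed.

End Forests.

Section Components.
Variable V : finType.
Implicit Types (A B O : {set {set V}}) (p q x y : V).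

Definition component A x := [set y | connect (adj A) x y].
Definition ncomp A := #|component A @: [set: V]|.

Lemma eq_component A x y : (component A x == component A y) = connect (adj A) x y.
Proof.
apply/eqP/idP => [Exy | xy].
  have: y \in component A y by rewrite inE connect0.
  by rewrite -Exy inE.
apply/setP=> z; rewrite !inE; apply/idP/idP => [xz | yz]; last exact: connect_trans yz.
by rewrite connect_adjC in xy; apply: connect_trans xz.
Qed.

Lemma ncomp_le_card A : ncomp A <= #|V|.
Proof. by rewrite /ncomp (leq_trans (leq_imset_card _ _)) ?cardsT. Qed.

Lemma ncomp_mono A B :
  (forall x y, connect (adj B) x y -> connect (adj A) x y) -> ncomp A <= ncomp B.
Proof.
move=> BA; apply: leq_card_imset_coarser => x y _ _ /eqP.
by rewrite eq_component => /BA; rewrite -eq_component => /eqP.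
Qed.

Lemma ncomp_setU1 A p q : ncomp A <= (ncomp ([set p; q] |: A)).+1.
Proof.
pose D := [set x | ~~ connect (adj A) q x].
have sub : component A @: [set: V] \subset component A q |: (component A @: D).
  apply/subsetP=> _ /imsetP[x _ ->]; rewrite !inE.
  have [qx | nqx] := boolP (connect (adj A) q x); first by rewrite eq_sym eq_component qx.
  by rewrite imset_f ?orbT ?inE.
rewrite /ncomp (leq_trans (subset_leq_card sub)) // cardsU1.
rewrite (leq_trans (leq_add (leq_b1 _) (leqnn _))) // add1n ltnS.
rewrite (leq_trans _ (subset_leq_card (imsetS _ (subsetT D)))) //.
apply: leq_card_imset_coarser => x y; rewrite !inE => nqx nqy /eqP.
rewrite eq_component => /connect_setU1[xy|[_ qy]|[xq _]].
- by apply/eqP; rewrite eq_component.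
- by rewrite qy in nqy.
- by rewrite connect_adjC xq in nqx.
Qed.

Lemma ncomp_setU1_bridge A p q :
  ~~ connect (adj A) p q -> (ncomp ([set p; q] |: A)).+1 <= ncomp A.
Proof.
move=> npq; set A' := _ |: A; pose D := [set x | ~~ connect (adj A) q x].
have pD : p \in D by rewrite inE connect_adjC.
have sAA' : A \subset A' by apply: subsetUr.
have sub : component A' @: [set: V] \subset component A' @: D.
  apply/subsetP=> _ /imsetP[x _ ->].
  have [qx | nqx] := boolP (connect (adj A) q x); last by rewrite imset_f ?inE.
  apply/imsetP; exists p => //; apply/eqP; rewrite eq_component connect_adjC.
  apply: connect_trans _ (connect_adj_sub sAA' qx).
  by apply: edge_connect; rewrite setU11.
have coarse : #|component A' @: D| <= #|component A @: D|.
  apply: leq_card_imset_coarser => x y _ _ /eqP; rewrite eq_component => xy.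
  by apply/eqP; rewrite eq_component; apply: connect_adj_sub sAA' xy.
have fine : component A @: D \subset component A @: [set: V] :\ component A q.
  apply/subsetP=> _ /imsetP[x xD ->]; rewrite !inE imset_f ?inE // andbT.
  by rewrite eq_sym eq_component; rewrite inE in xD.
rewrite /ncomp [X in _ < X](cardsD1 (component A q)) imset_f ?inE // add1n ltnS.
by rewrite (leq_trans (subset_leq_card sub)) // (leq_trans coarse) ?subset_leq_card.
Qed.

Lemma ncomp_forest A : is_graph A -> forest A -> #|A| + ncomp A <= #|V|.
Proof.
have [n] := ubnP #|A|; elim: n A => // n IH A; rewrite ltnS => An gA fA.
have [->|[f fA']] := set_0Vmem A; first by rewrite cards0 ncomp_le_card.
have /cards2P[p [q [npq fpq]]] : #|f| == 2 by rewrite gA.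
subst f; set A' := A :\ [set p; q].
have gA' : is_graph A' by move=> f /setD1P[_ /gA].
have forestA' : forest A' by apply: forest_sub fA; apply: subsetDl.
have cA : #|A| = #|A'|.+1 by rewrite (cardsD1 [set p; q]) fA'.
have := ncomp_setU1_bridge (forest_edge_sep fA fA' npq); rewrite setD1K // => bridge.
apply: leq_trans (IH A' _ gA' forestA'); last by rewrite -ltnS -cA.
by rewrite cA addSn -addnS leq_add2l.
Qed.

Lemma ncomp0 : ncomp set0 = #|V|.
Proof.
have comp0 x : component set0 x = [set x].
  apply/setP=> y; rewrite !inE; apply/idP/eqP => [|<-]; last exact: connect0.
  by case/connectP=> [[|z s]] /=; [move=> _ -> | rewrite /adj inE andbF].
by rewrite /ncomp (eq_imset _ comp0) card_imset ?cardsT //; apply: set1_inj.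
Qed.

Lemma ncomp_setU A O : is_graph O -> ncomp A <= ncomp (A :|: O) + #|O|.
Proof.
have [n] := ubnP #|O|; elim: n O => // n IH O; rewrite ltnS => On gO.
have [->|[f fO]] := set_0Vmem O; first by rewrite setU0 cards0 addn0.
have /cards2P[p [q [_ fpq]]] : #|f| == 2 by rewrite gO.
have gO' : is_graph (O :\ f) by move=> g /setD1P[_ /gO].
have cO : #|O| = #|O :\ f|.+1 by rewrite (cardsD1 f) fO.
have -> : A :|: O = [set p; q] |: (A :|: O :\ f) by rewrite -fpq setUCA setD1K.
rewrite cO in On *; apply: leq_trans (IH _ On gO') _.
by rewrite addnS -addSn leq_add2r ncomp_setU1.
Qed.

Lemma card_le_add_ncomp A : is_graph A -> #|V| <= #|A| + ncomp A.
Proof. by move=> gA; rewrite -ncomp0 addnC -{1}[A]set0U ncomp_setU. Qed.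

End Components.

Section MinimumSpanningForest.
Local Open Scope ring_scope.
Variables (R : realFieldType) (V : finType) (w : {set V} -> R) (S F : {set {set V}}).
Hypotheses (gS : is_graph S) (msf : min_spanning_forest w S F).

Let sFS : F \subset S. Proof. by case: msf => [[]]. Qed.
Let fF : forest F. Proof. by case: msf => [[]]. Qed.
Let cF x y : connect (adj F) x y = connect (adj S) x y. Proof. by case: msf => [[]]. Qed.

Let edgeF f : f \in F -> exists p q, p != q /\ f = [set p; q].
Proof. by move=> /(subsetP sFS)/gS/eqP/cards2P. Qed.

Lemma msf_exchange a b p q : [set a; b] \in S -> [set p; q] \in F ->
  ~~ connect (adj (F :\ [set p; q])) a b -> w [set p; q] <= w [set a; b].
Proof.
set e := [set a; b]; set f := [set p; q] => eS fF' sep.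
have eF : e \notin F :\ f by apply: contraNN sep => /edge_connect.
set F' := e |: (F :\ f).
have sF'S : F' \subset S by rewrite subUset sub1set eS (subset_trans (subsetDl _ _)).
have forestF' : forest F'.
  apply: edge_sep_forest => x y; rewrite in_setU1 => /orP[/eqP xye | xyF] nxy.
    by rewrite xye setU1K //; case/eq_set2: xye => -[-> ->]; rewrite // connect_adjC.
  have nxye : [set x; y] != e by apply: contraNneq eF => <-.
  have -> : F' :\ [set x; y] = e |: (F :\ f :\ [set x; y]).
    by apply/setP=> g; rewrite !inE; have [->|] := eqVneq g e; rewrite // eq_sym nxye.
  apply: contra (forest_edge_sep fF (subsetP (subsetDl _ _) _ xyF) nxy).
  move/(connect_setU1_drop (subsetDl _ _) sep (edge_connect xyF)).
  by apply: connect_adj_sub; apply: setSD; apply: subsetDl.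
have spanF' : spanning_forest_of S F'.
  split=> // x y; apply/idP/idP; first exact: connect_adj_sub.
  have pq : connect (adj F') p q.
    apply: connect_setU1_swap sep _; rewrite setD1K // cF.
    exact: edge_connect.
  rewrite -cF -(setD1K fF') => /(connect_adj_sub (setUS _ (subsetUr [set e] _))).
  exact: connect_setU1_connected pq.
have := proj2 msf _ spanF'.
by rewrite /wset (big_setD1 f fF') big_setU1 //= lerD2r.
Qed.

Lemma msf_cut t a b : [set a; b] \in S -> w [set a; b] < t ->
  connect (adj [set f in F | w f < t]) a b.
Proof.
move=> eS wt.
have heavy f : f \in F -> t <= w f -> connect (adj (F :\ f)) a b.
  move=> fF' tf; have [p [q [_ fpq]]] := edgeF fF'; subst f.
  by apply: contraTT wt => /(msf_exchange eS fF') fe; rewrite -leNgt (le_trans tf fe).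
have drop (K : {set {set V}}) :
    K \subset [set f in F | t <= w f] -> connect (adj (F :\: K)) a b.
  have [n] := ubnP #|K|; elim: n K => // n IH K; rewrite ltnS => Kn sK.
  have [->|[g gK]] := set_0Vmem K; first by rewrite setD0 cF edge_connect.
  have /setIdP[gF tg] := subsetP sK _ gK.
  have [p [q [npq gpq]]] := edgeF gF.
  have sKF : F :\: K \subset F :\ g by apply: setDS; rewrite sub1set.
  apply: (connect_setU1_drop sKF _ (heavy _ gF tg)).
    by rewrite gpq; apply: forest_edge_sep; rewrite -?gpq.
  have -> : [set p; q] |: (F :\: K) = F :\: (K :\ g).
    by apply/setP=> z; rewrite -gpq !inE; have [->|] := eqVneq z g; rewrite ?gF.
  apply: IH; first by rewrite (cardsD1 g) gK in Kn.
  exact: subset_trans (subsetDl _ _) sK.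
suff -> : [set f in F | w f < t] = F :\: [set f in F | t <= w f] by apply: drop.
by apply/setP=> f; rewrite !inE ltNge negb_and andb_orl andNb andbC.
Qed.

Lemma card_heavy_msf_le (K : {set {set V}}) t : is_graph K ->
  (forall x y, connect (adj K) x y) ->
  (card_ge w F t <= #|[set g in K | (g \notin S) || (t <= w g)%R]|)%N.
Proof.
move=> gK Kconn; rewrite -[card_ge w F t]/#|[set f in F | t <= w f]|.
set Fhi := [set f in F | _]; set Khi := [set g in K | _].
set Flo := [set f in F | w f < t]; set Klo := [set g in K | (g \in S) && (w g < t)].
have gF : is_graph F by move=> f /(subsetP sFS)/gS.
have gFlo : is_graph Flo by move=> f /setIdP[/gF].
have gKhi : is_graph Khi by move=> f /setIdP[/gK].
have splitF : (#|Flo| + #|Fhi| = #|F|)%N.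
  rewrite -(cardsID [set f | w f < t] F); congr (_ + _)%N; apply: eq_card => f.
    by rewrite !inE.
  by rewrite !inE -leNgt andbC.
have splitK : Klo :|: Khi = K.
  by apply/setP=> g; rewrite !inE -andb_orr leNgt -negb_and orbN andbT.
have ncompF := ncomp_forest gF fF.
have ncompFlo := card_le_add_ncomp gFlo.
have Flo_Klo : (ncomp Flo <= ncomp Klo)%N.
  apply: ncomp_mono => x y; apply: connect_sub => u v /andP[_].
  by rewrite inE => /andP[_ /andP[uvS uvt]]; apply: msf_cut.
have Klo_K : (ncomp Klo <= ncomp K + #|Khi|)%N by rewrite -splitK ncomp_setU.
have K_F : (ncomp K <= ncomp F)%N by apply: ncomp_mono => x y _; apply: Kconn.
lia.
Qed.

End MinimumSpanningForest.

Definition edge (V : finType) (xy : V * V) : {set V} := [set xy.1; xy.2].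

Definition path_edges (V : finType) (p : seq V) : seq (V * V) := zip p (behead p).

Section HamiltonianPath.
Variables (V : finType) (E : {set {set V}}) (p : seq V).
Hypothesis hamp : ham_path E p.

Lemma ham_path_adj xy : xy \in path_edges p -> adj E xy.1 xy.2.
Proof.
case: p hamp => [|x s] [_ _] //=.
elim: s x => [|y s IH] x //= /andP[exy pth]; rewrite in_cons.
by case/predU1P=> [-> | /IH]; auto.
Qed.

Lemma ham_path_connect (K : {set {set V}}) :
  {in path_edges p, forall xy, edge xy \in K} -> forall x y, connect (adj K) x y.
Proof.
case: hamp => _ cov _; case: p cov => [|x0 s] cov edgesK; first by move=> x; have := cov x.
have from_x0 v : v \in x0 :: s -> connect (adj K) x0 v.
  elim: s x0 {cov} edgesK => [|y s IH] x edgesK; rewrite in_cons => /predU1P[-> | vs] //.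
  apply: connect_trans (edge_connect (edgesK (x, y) _)) (IH y _ vs); first exact: mem_head.
  by move=> xy xys; apply: edgesK; rewrite inE xys orbT.
move=> x y; have x0x := from_x0 x (cov x); rewrite connect_adjC in x0x.
exact: connect_trans x0x (from_x0 y (cov y)).
Qed.

Lemma count_path_edges_at c :
  count (fun xy => (xy.1 == c) || (xy.2 == c)) (path_edges p) <= 2.
Proof.
case: hamp => up _ _; set P := path_edges p.
apply: leq_trans (_ : _ <= count (pred1 c \o fst) P + count (pred1 c \o snd) P) _.
  by rewrite -count_predUI leq_addr.
rewrite -[2]/(1 + 1); apply: leq_add.
  by apply: leq_trans (count_zip_fst _ _ _) _; rewrite count_uniq_mem ?leq_b1.
apply: leq_trans (count_zip_snd _ _ _) _; rewrite count_uniq_mem ?leq_b1 //.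
by case: p up => //= x s /andP[].
Qed.

End HamiltonianPath.

Lemma card_nonisolated_le (V : finType) (X : {set {set V}}) :
  is_graph X -> #|~: isolated X| <= 2 * #|X|.
Proof.
move=> gX; have sub : ~: isolated X \subset \bigcup_(f in X) f.
  apply/subsetP=> v; rewrite !inE => /forall_inPn[f fX].
  by rewrite negbK => vf; apply/bigcupP; exists f.
apply: leq_trans (subset_leq_card sub) _; apply: leq_trans (card_bigcup_le _ _) _.
by rewrite mulnC -sum_nat_const; apply: leq_sum => f /gX ->.
Qed.

Definition missing_below (R : realFieldType) (V : finType) (S : {set {set V}})
    (w : {set V} -> R) (t : R) (xy : V * V) :=
  (edge xy \notin S) && (w (edge xy) < t)%R.

Section PathAgainstSDG.
Local Open Scope ring_scope.
Variables (R : realFieldType) (V : finType) (E : {set {set V}}) (w : {set V} -> R).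
Variables (r : V -> R) (H : seq V).
Hypothesis hamH : ham_path E H.

Let S := SDG E w r.

Lemma card_heavy_msf_le_path F t : is_graph S -> min_spanning_forest w S F ->
  (card_ge w F t <= count_ge t [seq w (edge xy) | xy <- path_edges H] +
                    count (missing_below S w t) (path_edges H))%N.
Proof.
move=> gS msf; set K := [set edge xy | xy in path_edges H].
have gK : is_graph K.
  by move=> _ /imsetP[xy /(ham_path_adj hamH)/andP[nxy _] ->]; rewrite cards2 nxy.
have Kconn := ham_path_connect hamH (fun xy xyH => imset_f (@edge V) xyH).
apply: leq_trans (card_heavy_msf_le gS msf t gK Kconn) _.
apply: leq_trans (count_imset_filter_le _ _ _) _; rewrite /count_ge count_map -count_predUI.
apply: leq_trans (leq_addr _ _); apply: sub_count => xy /=.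
by rewrite /missing_below ltNge; case: (t <= w (edge xy)); rewrite ?orbF ?andbT.
Qed.

Let low_end (xy : V * V) := if r xy.1 < w (edge xy) then xy.1 else xy.2.

Let low_end_lt xy :
  xy \in path_edges H -> edge xy \notin S -> r (low_end xy) < w (edge xy).
Proof.
move=> /(ham_path_adj hamH)/andP[_ eE]; rewrite inE eE /= => /forall_inPn[u uxy].
rewrite -ltNge /low_end => ru; case: ifP => // /negbT; rewrite -leNgt.
by case/set2P: uxy ru => -> ru; rewrite // leNgt ru.
Qed.

Lemma count_missing_below_le (X : {set {set V}}) t :
  X \subset S -> {in X, forall f, t <= w f} ->
  (count (missing_below S w t) (path_edges H) <= 2 * #|isolated X|)%N.
Proof.
move=> sXS Xt; rewrite -size_filter; apply: (size_le_fibers (g := low_end)).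
  apply/allP=> xy; rewrite mem_filter => /andP[/andP[eS wt] xyH].
  rewrite inE; apply/forall_inP=> f fX; apply/negP=> uf.
  have /setIdP[_ /forall_inP/(_ _ uf) wf] := subsetP sXS _ fX.
  have := lt_le_trans (le_lt_trans wf (lt_trans (low_end_lt xyH eS) wt)) (Xt _ fX).
  by rewrite ltxx.
move=> c; rewrite count_filter; apply: leq_trans (count_path_edges_at hamH c).
by apply: sub_count => xy /andP[/eqP <- _]; rewrite /low_end; case: ifP; rewrite eqxx ?orbT.
Qed.

Lemma card_le_5_isolated (X : {set {set V}}) t :
  is_graph X -> X \subset S -> {in X, forall f, t <= w f} ->
  (#|X| <= count (missing_below S w t) (path_edges H))%N ->
  (#|V| <= 5 * #|isolated X|)%N.
Proof.
move=> gX sXS Xt cX; have := count_missing_below_le sXS Xt.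
have := card_nonisolated_le gX; rewrite -(cardsC (isolated X)); lia.
Qed.

End PathAgainstSDG.

Local Open Scope ring_scope.

Theorem mainTheorem2 (R : realFieldType) (V : finType)
  (E : {set {set V}}) (w : {set V} -> R) (r : V -> R)
  (F : {set {set V}}) (H : seq V) :
  is_graph E ->
  distinct_pos_weights E w ->
  (exists p, ham_path E p) ->
  (forall v, 0 < r v) ->
  min_spanning_forest w (SDG E w r) F ->
  min_ham_path E w H ->
  exists Et : {set {set V}},
    [/\ Et \subset F, wset w Et <= path_weight w H &
        (#|V| <= 5 * #|isolated (F :\: Et)|)%N].
Proof.
move=> gE [w_gt0 _] _ _ msf [hamH _]; set S := SDG E w r.
have gS : is_graph S by move=> f /setIdP[/gE].
have [[sFS _ _] _] := msf.
set b := [seq w (edge xy) | xy <- path_edges H].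
have b_ge0 : all (>= 0) b.
  by apply/allP=> _ /mapP[xy /(ham_path_adj hamH)/andP[_ eE] ->]; apply/ltW/w_gt0.
have heavy t : (card_ge w F t <= count_ge t b + count (missing_below S w t) (path_edges H))%N.
  exact: card_heavy_msf_le_path.
have [X [t0 [sXF X_ge_t0 cX sumFX]]] := exists_trim_threshold b_ge0 heavy.
have sXS : X \subset S := subset_trans sXF sFS.
exists (F :\: X); split; first exact: subsetDl.
  by move: sumFX; rewrite /wset big_map.
rewrite setDDr setDv set0U (setIidPr sXF).
by apply: (card_le_5_isolated hamH _ sXS X_ge_t0 cX) => f /(subsetP sXS)/gS.
Qed.
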